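(* Let $A=\{a_1,a_2,\ldots,a_k\}$ be a set of $k\ge1$ distinct positive integers, let $\tau$ be a permutation of $\{1,2,\ldots,k\}$, and let $A_{\tau(j)}=\{a_{\tau(1)},\ldots,a_{\tau(j)}\}$ for $j=1,\ldots,k$, with $A_{\tau(0)}=\emptyset$. Then the following are equivalent: (a) No $2$-element subset of $A$ is relatively prime (i.e. $\gcd(a,b)>1$ for all distinct $a,b\in A$). (b) \[ \sum_{d=1}^{\sup A} \mu(d)\, v(A,d)\,(v(A,d)-1) = 0. \] (c) \[ \sum_{j=1}^k \sum_{d\mid a_{\tau(j)}} \mu(d)\, v(A_{\tau(j-1)},d) = 0. \]
   Context: $\sup A$ is the largest element of $A$. $\mu$ is the Möbius function. For a finite set $X$ of positive integers and a positive integer $d$, $v(X,d)$ is the number of multiples of $d$ in $X$ (so $v(\emptyset,d)=0$). *)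

From mathcomp Require Import all_boot all_order all_algebra all_fingroup.
Set Implicit Arguments. Unset Strict Implicit. Unset Printing Implicit Defensive.
Import GRing.Theory Num.Theory.

(* Moebius function: mu(n) = (-1)^(number of prime factors) if n is
   squarefree and positive, 0 otherwise (mu 0 := 0, never used). *)
Definition mobius (n : nat) : int :=
  if (0 < n)%N && all (fun p => logn p n == 1%N) (primes n)
  then ((-1) ^+ size (primes n))%R else 0%R.

(* v(X,d): number of multiples of d in the finite set X (given as a
   duplicate-free list). *)
Definition v (X : seq nat) (d : nat) : nat := count (fun x => d %| x) X.

Definition setA (k : nat) (a : 'I_k -> nat) : seq nat := [seq a i | i : 'I_k <- enum 'I_k].

(* A_{tau(j)} = {a_{tau(1)}, ..., a_{tau(j)}} (0-indexed: tau i with i < j). *)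
Definition prefA (k : nat) (a : 'I_k -> nat) (tau : {perm 'I_k}) (j : nat) : seq nat :=
  [seq a (tau i) | i : 'I_k <- [seq i <- enum 'I_k | (nat_of_ord i < j)%N]].

Definition supA (k : nat) (a : 'I_k -> nat) : nat := \max_(i < k) a i.

From Stdlib Require Import Setoid.
From mathcomp Require Import all_boot all_order all_algebra all_fingroup.
Import GRing.Theory Num.Theory.

(* Since [\sum_(d | n) mu d = [n == 1]], summing [mu d [d | x] [d | y]] over all d
   counts whether [gcd x y = 1].  Hence the sum in (b) is the number of ordered
   coprime pairs of distinct elements of A, and the sum in (c) the number of pairs
   [a_tau(i), a_tau(j)] with [i < j] that are coprime; a sum of such indicators
   vanishes iff no pair is coprime. *)

Lemma mobius_prime_sq p x : prime p -> p %| x -> mobius (p * x) = 0%R.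
Proof.
move=> p_pr p_x; have [->|x_gt0] := posnP x; first by rewrite muln0.
have p_gt0 := prime_gt0 p_pr.
rewrite /mobius muln_gt0 p_gt0 x_gt0 /=; case: allP => // sqfree.
have p_px : p \in primes (p * x) by rewrite mem_primes p_pr muln_gt0 p_gt0 x_gt0 dvdn_mulr.
have := sqfree p p_px; rewrite lognM // logn_prime // eqxx.
have : 0 < logn p x by rewrite logn_gt0 mem_primes p_pr x_gt0 p_x.
by case: (logn p x).
Qed.

Lemma mobius_primeM p x : prime p -> ~~ (p %| x) -> 0 < x ->
  mobius (p * x) = (- mobius x)%R.
Proof.
move=> p_pr p'x x_gt0; have p_gt0 := prime_gt0 p_pr.
have primes_px : perm_eq (primes (p * x)) (p :: primes x).
  apply: uniq_perm; first exact: primes_uniq.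
    by rewrite /= primes_uniq mem_primes (negPf p'x) !andbF.
  by move=> q; rewrite primesM // primes_prime // !in_cons in_nil orbF.
rewrite /mobius muln_gt0 p_gt0 x_gt0 /= (perm_all _ primes_px) (perm_size primes_px) /=.
rewrite lognM // logn_prime // eqxx (logn_coprime (p := p)) ?prime_coprime //=.
rewrite (@eq_in_all _ _ (fun q => logn q x == 1)); last first.
  move=> q; rewrite mem_primes => /and3P[q_pr _ q_x].
  rewrite lognM // logn_prime //; case: (eqVneq q p) => // q_p.
  by rewrite q_p (negPf p'x) in q_x.
by case: all; rewrite ?exprS ?mulN1r ?oppr0.
Qed.

Lemma big_nat_dvd_mul (R : Type) (idx : R) (op : Monoid.com_law idx)
    (p N : nat) (P : pred nat) (F : nat -> R) :
  0 < p -> (forall e, P (p * e) -> p * e <= N) ->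
  \big[op/idx]_(0 <= d < N.+1 | (p %| d) && P d) F d =
  \big[op/idx]_(0 <= e < N.+1 | P (p * e)) F (p * e).
Proof.
move=> p_gt0 PN.
transitivity (\big[op/idx]_(d <- map (muln p) (index_iota 0 N.+1) | P d) F d); last first.
  by rewrite big_map.
rewrite -[LHS]big_filter -[RHS]big_filter; apply/perm_big/uniq_perm.
- by rewrite filter_uniq // iota_uniq.
- rewrite filter_uniq // map_inj_uniq ?iota_uniq // => x y /eqP.
  by rewrite eqn_pmul2l // => /eqP.
move=> x; rewrite !mem_filter mem_index_iota; apply/idP/idP.
- case/andP=> [/andP[/dvdnP[e ->] Pe] _]; rewrite mulnC in Pe *.
  rewrite Pe map_f // mem_index_iota ltnS (leq_trans _ (PN e Pe)) //.
  exact: leq_pmull.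
- case/andP=> [Px /mapP[e _ x_pe]]; subst x.
  by rewrite dvdn_mulr // Px /= ltnS PN.
Qed.

Lemma sum_mobius_dvd N n : 0 < n -> n <= N ->
  (\sum_(0 <= d < N.+1 | (d %| n)%N) mobius d = (n == 1)%N%:Z)%R.
Proof.
move=> n_gt0 nN; case: (ltngtP n 1) => [|n_gt1|n_eq1]; first by case: n n_gt0 {nN}.
- have p_pr := pdiv_prime n_gt1; have p_n := pdiv_dvd n.
  set p := pdiv n in p_pr p_n *; have p_gt0 := prime_gt0 p_pr.
  have [m n_pm] : exists m, n = p * m by exists (n %/ p); rewrite mulnC divnK.
  have m_gt0 : 0 < m by move: n_gt0; rewrite n_pm muln_gt0 => /andP[].
  clearbody p; rewrite (bigID (dvdn p)) /=.
  (* Divisors [p e] of [n = p m] with [p | e] have [mu = 0]; the others are [-mu e]. *)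
  have -> : (\sum_(0 <= d < N.+1 | (d %| n)%N && (p %| d)%N) mobius d =
             - \sum_(0 <= d < N.+1 | (d %| m)%N && ~~ (p %| d)%N) mobius d)%R.
    rewrite (eq_bigl (fun d => (p %| d) && (d %| n))) => [|d]; last exact: andbC.
    rewrite big_nat_dvd_mul //; last first.
      by move=> e /(dvdn_leq n_gt0) pe_n; apply: leq_trans pe_n nN.
    rewrite (eq_bigl (dvdn^~ m)) => [|e]; last by rewrite n_pm dvdn_pmul2l.
    rewrite (bigID (dvdn p) (dvdn^~ m)) /= big1 ?add0r => [|e /andP[_ p_e]].
      rewrite -sumrN; apply: eq_bigr => e /andP[e_m p'e].
      by rewrite mobius_primeM // (dvdn_gt0 m_gt0 e_m).
    exact: mobius_prime_sq.
  apply/eqP; rewrite addrC subr_eq0; apply/eqP/eq_bigl => d.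
  rewrite n_pm; case p_d: (p %| d); rewrite ?andbF ?andbT //.
  by rewrite Gauss_dvdr // coprime_sym prime_coprime // p_d.
- subst n; rewrite big_mkord (big_pred1 (inord 1)) ?inordK ?ltnS // => d.
  by rewrite /= dvdn1 -(inj_eq val_inj) /= inordK.
Qed.

Lemma sum_mobius_dvd_coprime N x y : 0 < x -> x <= N ->
  (\sum_(0 <= d < N.+1 | (d %| x)%N) mobius d * (d %| y)%N%:Z = (coprime x y)%:Z)%R.
Proof.
move=> x_gt0 xN; rewrite -(sum_mobius_dvd N); last 2 first.
- by rewrite gcdn_gt0 x_gt0.
- exact: leq_trans (dvdn_leq x_gt0 (dvdn_gcdl x y)) xN.
rewrite big_mkcond [RHS]big_mkcond; apply: eq_bigr => d _.
by rewrite dvdn_gcd; case: (d %| x); case: (d %| y); rewrite /= ?mulr1 ?mulr0.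
Qed.

Lemma Posz_sum (I : Type) (r : seq I) (P : pred I) (F : I -> nat) :
  Posz (\sum_(i <- r | P i) F i) = (\sum_(i <- r | P i) Posz (F i))%R.
Proof. exact: (big_morph Posz PoszD). Qed.

Lemma count_map_filter (T : Type) (f : T -> nat) (Q : pred T) (P : pred nat) (r : seq T) :
  count P [seq f i | i <- r & Q i] = \sum_(i <- r | Q i) P (f i).
Proof.
elim: r => [|x r IHr] /=; first by rewrite big_nil.
by rewrite big_cons; case: (Q x); rewrite /= IHr.
Qed.

Lemma v_setA k (a : 'I_k -> nat) d : v (setA a) d = \sum_(i < k) (d %| a i).
Proof.
by rewrite /v /setA -{1}(filter_predT (enum 'I_k)) count_map_filter big_enum_cond.
Qed.

Lemma v_prefA k (a : 'I_k -> nat) (tau : {perm 'I_k}) (j d : nat) :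
  v (prefA a tau j) d = \sum_(i < k | i < j) (d %| a (tau i)).
Proof. by rewrite /v /prefA (@count_map_filter _ (a \o tau)) big_enum_cond. Qed.

Lemma count_mul_count_subn1 k (b : 'I_k -> bool) :
  let c := Posz (\sum_(i < k) b i) in
  (c * (c - 1) = \sum_(i < k) \sum_(j < k | j != i) (b i)%:Z * (b j)%:Z)%R.
Proof.
rewrite /= Posz_sum mulrBr mulr1 big_distrl -sumrB; apply: eq_bigr => i _.
rewrite big_distrr (bigD1 i) //= -addrA.
have -> : ((b i)%:Z * (b i)%:Z = (b i)%:Z)%R by case: (b i).
by rewrite addrC subrK.
Qed.

Lemma psum2_nat_eq0P (I J : finType) (P : I -> pred J) (F : I -> J -> nat) :
  (\sum_i \sum_(j | P i j) (F i j)%:Z = 0)%R <-> (forall i j, P i j -> F i j = 0).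
Proof.
split=> [sum0 i j Pij | F0]; last by rewrite big1 // => i _; rewrite big1 // => j /F0 ->.
have sum_ge0 (i' : I) : (0 <= \sum_(j | P i' j) (F i' j)%:Z)%R by rewrite sumr_ge0.
have sumi0 := psumr_eq0P (fun i' _ => sum_ge0 i') sum0 (i := i) isT.
by have [] := psumr_eq0P (fun j' _ => le0z_nat (F i j')) sumi0 (i := j) Pij.
Qed.

Lemma sym_offdiag_perm_lt k (P : rel 'I_k) (tau : {perm 'I_k}) : symmetric P ->
  (forall i j, i != j -> P i j) <-> (forall i j : 'I_k, i < j -> P (tau j) (tau i)).
Proof.
move=> P_sym; split=> [P_offdiag i j ij | P_lt i j ij].
  by rewrite P_offdiag // (inj_eq perm_inj); apply: contraTneq ij => ->; rewrite ltnn.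
case: (ltngtP (tau^-1 i)%g (tau^-1 j)%g) => [lt|gt|/val_inj/perm_inj eq_ij].
- by rewrite P_sym -[i](permKV tau) -[j](permKV tau) P_lt.
- by rewrite -[i](permKV tau) -[j](permKV tau) P_lt.
- by rewrite eq_ij eqxx in ij.
Qed.

Section PairCounts.

Variables (k : nat) (a : 'I_k -> nat).
Hypothesis a_pos : forall i, 0 < a i.

Lemma sum_mobius_v_setA N : (forall i, a i <= N) ->
  (\sum_(1 <= d < N.+1) mobius d * (v (setA a) d)%:Z * ((v (setA a) d)%:Z - 1) =
   \sum_(i < k) \sum_(j < k | j != i) (coprime (a i) (a j))%:Z)%R.
Proof.
move=> aN; under eq_bigr do rewrite v_setA -mulrA count_mul_count_subn1 big_distrr.
rewrite exchange_big; apply: eq_bigr => i _.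
under eq_bigr do rewrite big_distrr.
rewrite exchange_big; apply: eq_bigr => j _.
rewrite -(sum_mobius_dvd_coprime N (a i) (a j) (a_pos i) (aN i)) [RHS]big_mkcond.
rewrite [RHS]big_ltn //= mul0r if_same add0r.
by apply: eq_bigr => d _; case: (d %| a i); rewrite /= ?mul1r ?mul0r ?mulr0.
Qed.

Lemma sum_mobius_v_prefA (tau : {perm 'I_k}) :
  (\sum_(j < k) \sum_(d <- divisors (a (tau j))) mobius d * (v (prefA a tau j) d)%:Z =
   \sum_(j < k) \sum_(i < k | (i < j)%N) (coprime (a (tau j)) (a (tau i)))%:Z)%R.
Proof.
apply: eq_bigr => j _; have aj_gt0 := a_pos (tau j).
have divisors_iota : perm_eq (divisors (a (tau j)))
    [seq d <- index_iota 0 (a (tau j)).+1 | d %| a (tau j)].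
  rewrite uniq_perm ?divisors_uniq ?filter_uniq ?iota_uniq // => d.
  rewrite -dvdn_divisors // mem_filter mem_iota ltnS /=.
  by case: (boolP (d %| _)) => //= /(dvdn_leq aj_gt0) ->.
rewrite (perm_big _ divisors_iota) big_filter.
under eq_bigr do rewrite v_prefA Posz_sum big_distrr.
rewrite exchange_big; apply: eq_bigr => i _.
exact: sum_mobius_dvd_coprime.
Qed.

End PairCounts.

Theorem theorem5p7 (k : nat) (hk : (1 <= k)%N) (a : 'I_k -> nat)
    (a_inj : injective a) (a_pos : forall i, (0 < a i)%N) (tau : {perm 'I_k}) :
  let condA := forall i j : 'I_k, i != j -> (1 < gcdn (a i) (a j))%N in
  let condB := (\sum_(1 <= d < (supA a).+1)
                 mobius d * (v (setA a) d)%:Z * ((v (setA a) d)%:Z - 1) = 0)%R in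
  let condC := (\sum_(j < k) \sum_(d <- divisors (a (tau j)))
                 mobius d * (v (prefA a tau j) d)%:Z = 0)%R in
  (condA <-> condB) /\ (condB <-> condC).
Proof.
move=> condA condB condC.
set noncoprime := [rel x y : 'I_k | ~~ coprime (a x) (a y)].
have sym : symmetric noncoprime by move=> x y; rewrite /= coprime_sym.
have coprime0 x y : nat_of_bool (coprime x y) = 0 <-> ~~ coprime x y by case: coprime.
have eqA : condA <-> forall i j, i != j -> noncoprime i j.
  split=> A i j /A; rewrite /= /coprime.
    by apply: contraTN => /eqP ->.
  by rewrite ltn_neqAle eq_sym gcdn_gt0 a_pos andbT.
have eqB : condB <-> forall i j, i != j -> noncoprime i j.
  rewrite /condB sum_mobius_v_setA // => [|i]; last exact: leq_bigmax.
  by rewrite psum2_nat_eq0P; split=> B i j ij; apply/coprime0/B; rewrite eq_sym.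
have eqC : condC <-> forall i j : 'I_k, i < j -> noncoprime (tau j) (tau i).
  by rewrite /condC sum_mobius_v_prefA // psum2_nat_eq0P; split=> C j i /C /coprime0.
by rewrite eqA eqB eqC (@sym_offdiag_perm_lt _ _ tau sym).
Qed.
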